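(* Let $0<q<1$, $\alpha>-1$, let $n\ge0$ be an integer, and let $\lambda_s$ be the smallest eigenvalue of $\left((q^{\alpha+1};q)_{j+k}\,q^{-\binom{j+k+1}{2}-\alpha(j+k)}\right)_{j,k=0}^{n}$. Then \[ \lambda_s\ \ge\ \left(\sum_{m=0}^{n}\frac{q^m}{(q;q)_m\,(q^{\alpha+1};q)_m}\right)^{-1}. \] Moreover, with $\ell_m^{(\alpha)}(x;q)=(-1)^m\sqrt{\frac{(q^{\alpha+1};q)_m q^m}{(q;q)_m}}\sum_{k=0}^{m}\frac{(q^{-m};q)_k\,q^{\binom{k+1}{2}}q^{(\alpha+m)k}x^k}{(q;q)_k(q^{\alpha+1};q)_k}$, one has $\big(\ell_m^{(\alpha)}(-1;q)\big)^2=\frac{q^m}{(q;q)_m(q^{\alpha+1};q)_m}$ for every $m\ge0$.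
   Context: $(a;q)_m=\prod_{i=0}^{m-1}(1-aq^i)$ for integers $m\ge0$ (empty product $=1$). *)

From Stdlib Require Import Reals.
Open Scope R_scope.

Fixpoint qpoch (a q : R) (m : nat) : R :=
  match m with
  | O => 1
  | S m' => qpoch a q m' * (1 - a * q ^ m')
  end.

Definition choose2 (N : nat) : R := INR N * (INR N - 1) / 2.

(* The (n+1)x(n+1) matrix, indexed by j,k in {0..n} (entries given for all j,k):
   A_{jk} = (q^{alpha+1};q)_{j+k} q^{-binom(j+k+1,2) - alpha (j+k)} *)
Definition hankelA (q alpha : R) (j k : nat) : R :=
  qpoch (Rpower q (alpha + 1)) q (j + k)
  * Rpower q (- choose2 (j + k + 1) - alpha * INR (j + k)).

Definition is_eigenvalue (n : nat) (A : nat -> nat -> R) (lam : R) : Prop :=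
  exists v : nat -> R,
    (exists i, (i <= n)%nat /\ v i <> 0) /\
    forall j, (j <= n)%nat -> sum_f_R0 (fun k => A j k * v k) n = lam * v j.

Definition is_smallest_eigenvalue (n : nat) (A : nat -> nat -> R) (lam : R) : Prop :=
  is_eigenvalue n A lam /\ forall mu, is_eigenvalue n A mu -> lam <= mu.

Definition ell (q alpha : R) (m : nat) (x : R) : R :=
  (-1) ^ m
  * sqrt (qpoch (Rpower q (alpha + 1)) q m * q ^ m / qpoch q q m)
  * sum_f_R0 (fun k =>
      qpoch (Rpower q (- INR m)) q k * Rpower q (choose2 (k + 1))
      * Rpower q ((alpha + INR m) * INR k) * x ^ k
      / (qpoch q q k * qpoch (Rpower q (alpha + 1)) q k)) m.

(* Write a = q^(alpha+1) in (0,1).  The matrix of the theorem is the Hankel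
   matrix A_(j,k) = mu_(j+k) of the moments mu_N = (a;q)_N q^(-N(N-1)/2) a^-N,
   and the (unnormalised) little q-Laguerre polynomials
     p_m(x) = sum_(k<=m) c_(m,k) x^k,
     c_(m,k) = (q^-m;q)_k q^(k(k-1)/2) a^k q^(mk) / ((q;q)_k (a;q)_k),
   are orthogonal for these moments: C A C^T = diag(d) with C = (c_(m,k))
   lower triangular and d_m = (q;q)_m / (q^m (a;q)_m).  Orthogonality reduces
   to the vanishing of a terminating q-series at q, q^2, ..., q^m, which
   follows from its q-difference equation.

   For such a congruence, every eigenvalue lam satisfies lam tr(A^-1) >= 1,
   with tr(A^-1) = sum_m |row_m(C)|^2 / d_m (Cauchy-Schwarz in the
   coordinates w, v = C^T w).  The coefficients alternate in sign,
   c_(m,k) (-1)^k = [m k]_q q^(k(k-1)) a^k / (a;q)_k >= 0, and an induction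
   with the q-Pascal rule gives sum_k c_(m,k) (-1)^k = p_m(-1) = 1/(a;q)_m.
   Hence |row_m(C)|^2 <= p_m(-1)^2 and each row contributes at most
   q^m / ((q;q)_m (a;q)_m) = ell_m(-1)^2 to tr(A^-1), which gives both
   assertions (the eigenvalue bound for every eigenvalue, not only the
   smallest one). *)

From Stdlib Require Import Reals Lra Lia.
Open Scope R_scope.

Lemma sum_scal_l (f : nat -> R) (c : R) (N : nat) :
  sum_f_R0 (fun i => c * f i) N = c * sum_f_R0 f N.
Proof. rewrite scal_sum. apply sum_eq. intros; ring. Qed.

Lemma sum_swap (f : nat -> nat -> R) (N M : nat) :
  sum_f_R0 (fun i => sum_f_R0 (fun j => f i j) M) N =
  sum_f_R0 (fun j => sum_f_R0 (fun i => f i j) N) M.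
Proof.
  induction N as [|N IH]; simpl; [reflexivity|].
  now rewrite IH, <- sum_plus.
Qed.

Lemma sum_prod (f g : nat -> R) (N M : nat) :
  sum_f_R0 f N * sum_f_R0 g M =
  sum_f_R0 (fun i => sum_f_R0 (fun j => f i * g j) M) N.
Proof.
  rewrite Rmult_comm, scal_sum. apply sum_eq. intros i _.
  rewrite <- sum_scal_l. apply sum_eq. intros; ring.
Qed.

Lemma sum_nonneg (f : nat -> R) (N : nat) :
  (forall k, (k <= N)%nat -> 0 <= f k) -> 0 <= sum_f_R0 f N.
Proof.
  induction N as [|N IH]; intros H; simpl; [apply H; lia|].
  assert (0 <= f (S N)) by (apply H; lia).
  assert (0 <= sum_f_R0 f N) by (apply IH; intros; apply H; lia). lra.
Qed.

Lemma sum_truncate (f : nat -> R) (m N : nat) :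
  (m <= N)%nat -> (forall k, (m < k <= N)%nat -> f k = 0) ->
  sum_f_R0 f N = sum_f_R0 f m.
Proof.
  induction N as [|N IH]; intros Hm H.
  - now replace m with 0%nat by lia.
  - destruct (Nat.eq_dec m (S N)) as [->|E]; [reflexivity|].
    rewrite tech5, IH, (H (S N)) by (lia || (intros; apply H; lia)). ring.
Qed.

Lemma sum_zeros (f : nat -> R) (N : nat) :
  (forall k, (k <= N)%nat -> f k = 0) -> sum_f_R0 f N = 0.
Proof.
  intros H. rewrite (sum_eq _ (fun _ => 0)) by auto. rewrite sum_cte. ring.
Qed.

Lemma sum_single (f : nat -> R) (k0 N : nat) :
  (k0 <= N)%nat -> (forall k, (k <= N)%nat -> k <> k0 -> f k = 0) ->
  sum_f_R0 f N = f k0.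
Proof.
  intros Hk H.
  destruct k0 as [|k0].
  - rewrite (sum_truncate f 0 N) by (lia || (intros; apply H; lia)). reflexivity.
  - rewrite (sum_truncate f (S k0) N), tech5, sum_zeros
      by (lia || (intros; apply H; lia)). ring.
Qed.

Lemma sum_sq_le_sq_sum (y : nat -> R) (N : nat) :
  (forall k, (k <= N)%nat -> 0 <= y k) ->
  sum_f_R0 (fun k => y k ^ 2) N <= (sum_f_R0 y N) ^ 2.
Proof.
  induction N as [|N IH]; intros H; simpl; [lra|].
  assert (0 <= y (S N)) by (apply H; lia).
  assert (0 <= sum_f_R0 y N) by (apply sum_nonneg; intros; apply H; lia).
  assert (sum_f_R0 (fun k => y k ^ 2) N <= (sum_f_R0 y N) ^ 2)
    by (apply IH; intros; apply H; lia).
  simpl in *. nra.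
Qed.

Lemma cauchy_schwarz (x y : nat -> R) (N : nat) :
  (sum_f_R0 (fun i => x i * y i) N) ^ 2 <=
  sum_f_R0 (fun i => x i ^ 2) N * sum_f_R0 (fun i => y i ^ 2) N.
Proof.
  induction N as [|N IH]; [simpl; nra|].
  rewrite !tech5.
  set (Sxy := sum_f_R0 (fun i => x i * y i) N) in *.
  set (X := sum_f_R0 (fun i => x i ^ 2) N) in *.
  set (Y := sum_f_R0 (fun i => y i ^ 2) N) in *.
  set (a := x (S N)); set (b := y (S N)).
  assert (HX : 0 <= X) by (apply sum_nonneg; intros; apply pow2_ge_0).
  assert (HY : 0 <= Y) by (apply sum_nonneg; intros; apply pow2_ge_0).
  (* the cross term is controlled by the inductive hypothesis and AM-GM *)
  assert (Hcross : 2 * Sxy * a * b <= X * b ^ 2 + Y * a ^ 2).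
  { assert (Hsq : (2 * Sxy * a * b) ^ 2 <= (X * b ^ 2 + Y * a ^ 2) ^ 2).
    { assert (Sxy ^ 2 * (a * b) ^ 2 <= X * Y * (a * b) ^ 2)
        by (apply Rmult_le_compat_r; [apply pow2_ge_0 | exact IH]).
      assert (0 <= (X * b ^ 2 - Y * a ^ 2) ^ 2) by apply pow2_ge_0. nra. }
    assert (0 <= X * b ^ 2 + Y * a ^ 2) by nra. nra. }
  nra.
Qed.

Lemma weighted_cauchy_schwarz (x y d : nat -> R) (N : nat) :
  (forall i, (i <= N)%nat -> 0 < d i) ->
  (sum_f_R0 (fun i => x i * y i) N) ^ 2 <=
  sum_f_R0 (fun i => x i ^ 2 / d i) N * sum_f_R0 (fun i => d i * y i ^ 2) N.
Proof.
  intros Hd.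
  assert (Hs : forall i, (i <= N)%nat -> 0 < sqrt (d i) /\ sqrt (d i) ^ 2 = d i).
  { intros i Hi. split; [apply sqrt_lt_R0; auto|].
    simpl. rewrite Rmult_1_r. apply sqrt_sqrt. pose proof (Hd i Hi). lra. }
  pose proof (cauchy_schwarz (fun i => x i / sqrt (d i)) (fun i => sqrt (d i) * y i) N)
    as CS.
  replace (sum_f_R0 (fun i => x i * y i) N) with
    (sum_f_R0 (fun i => x i / sqrt (d i) * (sqrt (d i) * y i)) N).
  2:{ apply sum_eq. intros i Hi. destruct (Hs i Hi). field. lra. }
  replace (sum_f_R0 (fun i => x i ^ 2 / d i) N) with
    (sum_f_R0 (fun i => (x i / sqrt (d i)) ^ 2) N).
  2:{ apply sum_eq. intros i Hi. destruct (Hs i Hi) as [H0 E].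
      set (s := sqrt (d i)) in *. rewrite <- E. field. lra. }
  replace (sum_f_R0 (fun i => d i * y i ^ 2) N) with
    (sum_f_R0 (fun i => (sqrt (d i) * y i) ^ 2) N).
  2:{ apply sum_eq. intros i Hi. destruct (Hs i Hi) as [_ E].
      set (s := sqrt (d i)) in *. rewrite <- E. ring. }
  exact CS.
Qed.

Lemma sum_pos (f : nat -> R) (i N : nat) :
  (i <= N)%nat -> (forall k, (k <= N)%nat -> 0 <= f k) -> 0 < f i ->
  0 < sum_f_R0 f N.
Proof.
  induction N as [|N IH]; intros Hi Hf Hfi.
  - now replace i with 0%nat in Hfi by lia.
  - rewrite tech5. destruct (Nat.eq_dec i (S N)) as [->|E].
    + pose proof (sum_nonneg f N ltac:(intros; apply Hf; lia)). lra.
    + pose proof (IH ltac:(lia) ltac:(intros; apply Hf; lia) Hfi).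
      pose proof (Hf (S N) (le_n _)). lra.
Qed.

Lemma sum_shift (f : nat -> R) (N : nat) :
  f (S N) = 0 -> sum_f_R0 f N = f 0%nat + sum_f_R0 (fun i => f (S i)) N.
Proof.
  intros H. pose proof (decomp_sum f (S N) ltac:(lia)) as D. simpl pred in D.
  rewrite tech5, H in D. lra.
Qed.

(* Linear algebra of a real (n+1)x(n+1) matrix A that is congruent to a
   positive diagonal matrix through a triangular matrix C:
   C A C^T = diag(d), with C m k = 0 for m < k and C m m <> 0. *)
Section TriangularCongruence.

Variable n : nat.
Variables A C : nat -> nat -> R.
Variable d : nat -> R.

Hypothesis d_pos : forall m, (m <= n)%nat -> 0 < d m.
Hypothesis C_diag : forall m, (m <= n)%nat -> C m m <> 0.
Hypothesis C_triangular :
  forall m k, (m <= n)%nat -> (k <= n)%nat -> (m < k)%nat -> C m k = 0.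
Hypothesis C_congruence : forall m l, (m <= n)%nat -> (l <= n)%nat ->
  sum_f_R0 (fun j => sum_f_R0 (fun k => C m j * A j k * C l k) n) n
  = if Nat.eq_dec m l then d m else 0.

Definition transpose_apply (w : nat -> R) (k : nat) : R :=
  sum_f_R0 (fun m => C m k * w m) n.

Lemma transpose_apply_update (w : nat -> R) (k0 k : nat) (delta : R) :
  (k0 <= n)%nat ->
  transpose_apply (fun m => w m + (if Nat.eq_dec m k0 then delta else 0)) k
  = transpose_apply w k + C k0 k * delta.
Proof.
  intros Hk0. unfold transpose_apply.
  rewrite (sum_eq _ (fun m => C m k * w m
                              + C m k * (if Nat.eq_dec m k0 then delta else 0)))
    by (intros; ring).
  rewrite sum_plus. f_equal. rewrite (sum_single _ k0 n Hk0).
  - destruct (Nat.eq_dec k0 k0); [ring|lia].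
  - intros m _ Hm. destruct (Nat.eq_dec m k0); [lia|ring].
Qed.

(* C^T is invertible: every vector v is C^T w for some w.  Back substitution,
   fixing the coordinates w_n, w_(n-1), ... in turn. *)
Lemma transpose_surjective (v : nat -> R) :
  exists w, forall k, (k <= n)%nat -> v k = transpose_apply w k.
Proof.
  assert (Hstep : forall p, (p <= S n)%nat -> exists w,
     (forall m, (m + p < S n)%nat -> w m = 0) /\
     (forall k, (k <= n)%nat -> (S n <= k + p)%nat -> v k = transpose_apply w k)).
  { induction p as [|p IH]; intros Hp.
    - exists (fun _ => 0). split; [auto | intros; lia].
    - destruct (IH ltac:(lia)) as [w [Hw_zero Hw_solves]].
      set (k0 := (n - p)%nat).
      set (delta := (v k0 - transpose_apply w k0) / C k0 k0).
      exists (fun m => w m + (if Nat.eq_dec m k0 then delta else 0)). split.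
      + intros m Hm. destruct (Nat.eq_dec m k0); [lia|].
        rewrite Hw_zero by lia. ring.
      + intros k Hk Hkp. rewrite transpose_apply_update by (unfold k0; lia).
        destruct (Nat.eq_dec k k0) as [->|E].
        * unfold delta. field. apply C_diag. unfold k0; lia.
        * rewrite (C_triangular k0 k), <- Hw_solves by (unfold k0 in *; lia). ring. }
  destruct (Hstep (S n) (le_n _)) as [w [_ Hw]].
  exists w. intros k Hk. apply Hw; lia.
Qed.

Lemma quadratic_form_diagonal (w : nat -> R) :
  sum_f_R0 (fun j => transpose_apply w j
                     * sum_f_R0 (fun k => A j k * transpose_apply w k) n) n
  = sum_f_R0 (fun m => d m * w m ^ 2) n.
Proof.
  set (B := fun m l => sum_f_R0 (fun j => sum_f_R0 (fun k => C m j * A j k * C l k) n) n).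
  set (G := fun m l j k => w m * w l * (C m j * A j k * C l k)).
  transitivity (sum_f_R0 (fun m => sum_f_R0 (fun l => w m * w l * B m l) n) n).
  - transitivity (sum_f_R0 (fun j => sum_f_R0 (fun k =>
        sum_f_R0 (fun m => sum_f_R0 (fun l => G m l j k) n) n) n) n).
    { apply sum_eq. intros j _. rewrite <- sum_scal_l. apply sum_eq. intros k _.
      replace (transpose_apply w j * (A j k * transpose_apply w k))
        with (A j k * (transpose_apply w j * transpose_apply w k)) by ring.
      unfold transpose_apply. rewrite sum_prod, <- sum_scal_l. apply sum_eq. intros m _.
      rewrite <- sum_scal_l. apply sum_eq. intros l _. unfold G. ring. }
    rewrite (sum_eq _ (fun j => sum_f_R0 (fun m => sum_f_R0 (fun k =>
        sum_f_R0 (fun l => G m l j k) n) n) n)) by (intros; apply sum_swap).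
    rewrite sum_swap. apply sum_eq. intros m _.
    rewrite (sum_eq _ (fun j => sum_f_R0 (fun l => sum_f_R0 (fun k => G m l j k) n) n))
      by (intros; apply sum_swap).
    rewrite sum_swap. apply sum_eq. intros l _.
    unfold B, G. rewrite <- sum_scal_l. apply sum_eq. intros j _.
    rewrite <- sum_scal_l. reflexivity.
  - apply sum_eq. intros m Hm.
    rewrite (sum_single _ m n Hm).
    + unfold B. rewrite C_congruence by auto.
      destruct (Nat.eq_dec m m); [ring|lia].
    + intros l Hl Hlm. unfold B. rewrite C_congruence by auto.
      destruct (Nat.eq_dec m l); [lia|ring].
Qed.

(* The trace-type quantity sum_m |row_m(C)|^2 / d_m, which equals tr(A^-1). *)
Definition inverse_trace : R :=
  sum_f_R0 (fun m => sum_f_R0 (fun k => C m k ^ 2) n / d m) n.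

(* Cauchy-Schwarz on each coordinate of v = C^T w. *)
Lemma norm_le_inverse_trace (w : nat -> R) :
  sum_f_R0 (fun k => transpose_apply w k ^ 2) n
  <= inverse_trace * sum_f_R0 (fun m => d m * w m ^ 2) n.
Proof.
  set (W := sum_f_R0 (fun m => d m * w m ^ 2) n).
  apply Rle_trans with
    (sum_f_R0 (fun k => sum_f_R0 (fun m => C m k ^ 2 / d m) n * W) n).
  - apply sum_Rle. intros k _. apply weighted_cauchy_schwarz. exact d_pos.
  - right. rewrite <- scal_sum, Rmult_comm. f_equal.
    unfold inverse_trace. rewrite sum_swap. apply sum_eq. intros m _.
    unfold Rdiv. rewrite (Rmult_comm _ (/ d m)), scal_sum. reflexivity.
Qed.

Lemma eigenvalue_inverse_trace (lam : R) (v : nat -> R) :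
  (exists i, (i <= n)%nat /\ v i <> 0) ->
  (forall j, (j <= n)%nat -> sum_f_R0 (fun k => A j k * v k) n = lam * v j) ->
  1 <= lam * inverse_trace.
Proof.
  intros [i [Hi Hvi]] Heig.
  destruct (transpose_surjective v) as [w Hw].
  set (V := sum_f_R0 (fun k => v k ^ 2) n).
  set (W := sum_f_R0 (fun m => d m * w m ^ 2) n).
  assert (HV : 0 < V).
  { apply (sum_pos _ i n Hi); [intros; apply pow2_ge_0|].
    simpl. rewrite Rmult_1_r. apply Rsqr_pos_lt. exact Hvi. }
  assert (HlamV : lam * V = W).
  { unfold W. rewrite <- quadratic_form_diagonal.
    transitivity (sum_f_R0 (fun j => v j * sum_f_R0 (fun k => A j k * v k) n) n).
    - unfold V. rewrite <- sum_scal_l. apply sum_eq. intros j Hj.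
      rewrite Heig by exact Hj. ring.
    - apply sum_eq. intros j Hj. rewrite <- (Hw j Hj). f_equal.
      apply sum_eq. intros k Hk. rewrite <- (Hw k Hk). reflexivity. }
  assert (HVW : V <= inverse_trace * W).
  { unfold V. rewrite (sum_eq _ (fun k => transpose_apply w k ^ 2) n)
      by (intros k Hk; rewrite (Hw k Hk); reflexivity).
    apply norm_le_inverse_trace. }
  nra.
Qed.

Lemma eigenvalue_ge_inv (lam S : R) (v : nat -> R) :
  (exists i, (i <= n)%nat /\ v i <> 0) ->
  (forall j, (j <= n)%nat -> sum_f_R0 (fun k => A j k * v k) n = lam * v j) ->
  inverse_trace <= S -> / S <= lam.
Proof.
  intros Hv Heig HS.
  pose proof (eigenvalue_inverse_trace lam v Hv Heig) as H1.
  assert (0 <= inverse_trace).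
  { apply sum_nonneg. intros m Hm. apply Rle_mult_inv_pos; [|apply d_pos; exact Hm].
    apply sum_nonneg. intros; apply pow2_ge_0. }
  assert (Hlam : 0 < lam) by nra.
  assert (HSpos : 0 < S) by nra.
  apply (Rmult_le_reg_r S); [exact HSpos|]. rewrite Rinv_l by lra. nra.
Qed.

End TriangularCongruence.

Lemma qpoch_add (a q : R) (j k : nat) :
  qpoch a q (j + k) = qpoch a q j * qpoch (a * q ^ j) q k.
Proof.
  induction k as [|k IH]; simpl.
  - rewrite Nat.add_0_r. ring.
  - rewrite Nat.add_succ_r. simpl. rewrite IH, pow_add. ring.
Qed.

Lemma qpoch_succ_l (a q : R) (k : nat) :
  qpoch a q (S k) = (1 - a) * qpoch (a * q) q k.
Proof.
  change (S k) with (1 + k)%nat. rewrite qpoch_add. simpl.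
  rewrite !Rmult_1_r, Rmult_1_l. reflexivity.
Qed.

Lemma qpoch_terminates (a q : R) (m j : nat) :
  a * q ^ m = 1 -> (m < j)%nat -> qpoch a q j = 0.
Proof.
  intros H. induction j as [|j IH]; intros Hj; [lia|].
  simpl. destruct (Nat.eq_dec m j) as [->|E].
  - rewrite H. ring.
  - rewrite IH by lia. ring.
Qed.

Lemma pow_in_unit (q : R) (i : nat) : 0 < q < 1 -> 0 < q ^ i <= 1.
Proof. intros Hq. induction i; simpl; nra. Qed.

Lemma qpoch_pos (a q : R) (k : nat) :
  0 <= a < 1 -> 0 < q < 1 -> 0 < qpoch a q k.
Proof.
  intros Ha Hq. induction k; simpl; [lra|].
  pose proof (pow_in_unit q k Hq). apply Rmult_lt_0_compat; nra.
Qed.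

Definition qtri (q : R) (N : nat) : R := Rpower q (choose2 N).

Lemma choose2_S (N : nat) : choose2 (S N) = choose2 N + INR N.
Proof. unfold choose2. rewrite S_INR. field. Qed.

Lemma choose2_add (j k : nat) :
  choose2 (j + k) = choose2 j + choose2 k + INR j * INR k.
Proof. unfold choose2. rewrite plus_INR. field. Qed.

Lemma qtri_pos (q : R) (N : nat) : 0 < qtri q N.
Proof. apply exp_pos. Qed.

Lemma qtri_0 (q : R) : 0 < q -> qtri q 0 = 1.
Proof.
  intros Hq. unfold qtri, choose2. simpl.
  replace (0 * (0 - 1) / 2) with 0 by field. apply Rpower_O, Hq.
Qed.

Lemma qtri_S (q : R) (N : nat) : 0 < q -> qtri q (S N) = qtri q N * q ^ N.
Proof. intros. unfold qtri. rewrite choose2_S, Rpower_plus, Rpower_pow; auto. Qed.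

Lemma qtri_add (q : R) (j k : nat) : 0 < q ->
  qtri q (j + k) = qtri q j * qtri q k * q ^ (j * k).
Proof.
  intros. unfold qtri.
  rewrite choose2_add, !Rpower_plus, <- mult_INR, Rpower_pow; auto.
Qed.

Lemma qtri_sq (q : R) (m : nat) : 0 < q -> qtri q m ^ 2 * q ^ m = q ^ (m * m).
Proof.
  intros Hq. induction m as [|m IH].
  - rewrite qtri_0 by exact Hq. simpl. ring.
  - rewrite qtri_S by exact Hq.
    replace (S m * S m)%nat with (m * m + (2 * m + 1))%nat by lia.
    rewrite pow_add, <- IH. simpl. rewrite !pow_add. simpl. ring.
Qed.

Lemma neg1_sq (m : nat) : (-1) ^ m * (-1) ^ m = 1.
Proof. rewrite <- Rpow_mult_distr. replace (-1 * -1) with 1 by ring. apply pow1. Qed.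

(* The terminating basic hypergeometric series
     f_m(z) = sum_(j<=m) (q^-m;q)_j / (q;q)_j z^j
   and its evaluations needed for the orthogonality of the little
   q-Laguerre polynomials.  Everything follows from the q-difference
   equation f_m(z) (1 - z) = (1 - q^-m z) f_m(q z). *)
Section TerminatingSeries.

Variable q : R.
Hypothesis Hq : 0 < q < 1.

Definition qcoef (m j : nat) : R := qpoch (/ q ^ m) q j / qpoch q q j.

Definition qseries (m : nat) (z : R) : R :=
  sum_f_R0 (fun j => qcoef m j * z ^ j) m.

Lemma qq_pos (j : nat) : 0 < qpoch q q j.
Proof. apply qpoch_pos; lra. Qed.

(* q^-m q^m = 1, which makes (q^-m;q)_j terminate at j = m + 1. *)
Lemma inv_pow_cancel (m : nat) : / q ^ m * q ^ m = 1.
Proof. field. apply pow_nonzero. lra. Qed.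

Lemma qcoef_S (m j : nat) :
  qcoef m (S j) * (1 - q ^ S j) = qcoef m j * (1 - / q ^ m * q ^ j).
Proof.
  unfold qcoef. simpl qpoch. pose proof (qq_pos j).
  assert (q ^ S j < 1) by (apply pow_lt_1_compat; lia || lra).
  simpl in *. field. split; [apply pow_nonzero; lra | lra].
Qed.

Lemma qcoef_0 (m : nat) : qcoef m 0 = 1.
Proof. unfold qcoef. simpl. field. Qed.

Lemma qcoef_vanish (m j : nat) : (m < j)%nat -> qcoef m j = 0.
Proof.
  intros H. unfold qcoef.
  rewrite (qpoch_terminates _ _ m j (inv_pow_cancel m) H). unfold Rdiv. ring.
Qed.

Lemma qseries_difference (m : nat) (z : R) :
  qseries m z * (1 - z) = (1 - / q ^ m * z) * qseries m (q * z).
Proof.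
  unfold qseries.
  set (g := fun i => qcoef m i * (1 - q ^ i) * z ^ i).
  (* shifting the index turns the factor (1 - q^-m q^j) into (1 - q^(j+1)) *)
  assert (Hshift : sum_f_R0 (fun j => qcoef m j * (1 - / q ^ m * q ^ j) * z ^ S j) m
                   = sum_f_R0 g m).
  { transitivity (sum_f_R0 (fun j => g (S j)) m).
    - apply sum_eq. intros j _. unfold g. rewrite qcoef_S. reflexivity.
    - rewrite (sum_shift g m) by (unfold g; rewrite qcoef_vanish by lia; ring).
      replace (g 0%nat) with 0 by (unfold g; simpl; ring). ring. }
  assert (Hg : sum_f_R0 g m = sum_f_R0 (fun j => qcoef m j * z ^ j) m
                              - sum_f_R0 (fun j => qcoef m j * (q * z) ^ j) m).
  { rewrite <- minus_sum. apply sum_eq. intros. unfold g.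
    rewrite Rpow_mult_distr. ring. }
  assert (Hsplit : sum_f_R0 (fun j => qcoef m j * (1 - / q ^ m * q ^ j) * z ^ S j) m
     = z * sum_f_R0 (fun j => qcoef m j * z ^ j) m
       - / q ^ m * z * sum_f_R0 (fun j => qcoef m j * (q * z) ^ j) m).
  { rewrite <- !sum_scal_l, <- minus_sum. apply sum_eq. intros.
    rewrite Rpow_mult_distr. simpl. ring. }
  lra.
Qed.

(* f_m vanishes at q^t for 1 <= t <= m: descending induction from t = m,
   where the right-hand side of the difference equation vanishes. *)
Lemma qseries_root (m t : nat) : (1 <= t <= m)%nat -> qseries m (q ^ t) = 0.
Proof.
  intros Ht.
  remember (m - t)%nat as p eqn:Hp. revert t Ht Hp.
  induction p as [|p IH]; intros t Ht Hp;
    pose proof (qseries_difference m (q ^ t)) as F;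
    assert (q ^ t < 1) by (apply pow_lt_1_compat; lia || lra).
  - replace t with m in * by lia. rewrite inv_pow_cancel in F.
    assert (qseries m (q ^ m) * (1 - q ^ m) = 0) as Z by lra.
    apply Rmult_integral in Z. destruct Z; lra.
  - change (q * q ^ t) with (q ^ S t) in F. rewrite (IH (S t)) in F by lia.
    assert (qseries m (q ^ t) * (1 - q ^ t) = 0) as Z by lra.
    apply Rmult_integral in Z. destruct Z; lra.
Qed.

(* The twisted sums sum_j qcoef m j q^(t j) (b q^j;q)_k, which arise when
   the polynomials are paired with the moments. *)
Definition qtwisted (m t k : nat) (b : R) : R :=
  sum_f_R0 (fun j => qcoef m j * (q ^ t) ^ j * qpoch (b * q ^ j) q k) m.

(* From (b;q)_(k+1) = (1 - b) (bq;q)_k: lowering k costs one shift of t. *)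
Lemma qtwisted_S (m t k : nat) (b : R) :
  qtwisted m t (S k) b = qtwisted m t k (b * q) - b * qtwisted m (S t) k (b * q).
Proof.
  unfold qtwisted. rewrite <- sum_scal_l, <- minus_sum. apply sum_eq. intros j _.
  rewrite qpoch_succ_l.
  replace (b * q ^ j * q) with (b * q * q ^ j) by ring.
  change (q ^ S t) with (q * q ^ t). rewrite Rpow_mult_distr. ring.
Qed.

(* Iterating the recurrence down to k = 0 reaches f_m at q^t, ..., q^(t+k),
   which all vanish as long as 1 <= t and t + k <= m. *)
Lemma qtwisted_vanish (m k t : nat) (b : R) :
  (1 <= t)%nat -> (t + k <= m)%nat -> qtwisted m t k b = 0.
Proof.
  revert t b. induction k as [|k IH]; intros t b Ht Htk.
  - rewrite <- (qseries_root m t) by lia. unfold qtwisted, qseries.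
    apply sum_eq. intros. simpl. ring.
  - rewrite qtwisted_S, !IH by lia. ring.
Qed.

(* For t = 0 the recurrence only produces vanishing terms besides f_m(1). *)
Lemma qtwisted_0 (m k : nat) (b : R) :
  (k <= m)%nat -> qtwisted m 0 k b = qseries m 1.
Proof.
  revert b. induction k as [|k IH]; intros b Hk.
  - unfold qtwisted, qseries. apply sum_eq. intros. simpl. ring.
  - rewrite qtwisted_S, IH, qtwisted_vanish by lia. ring.
Qed.

(* f_m(1) = (q^-m;q)_m: evaluate qtwisted m 0 m q^-m, where only j = 0 survives. *)
Lemma qseries_at_1 (m : nat) : qseries m 1 = qpoch (/ q ^ m) q m.
Proof.
  rewrite <- (qtwisted_0 m m (/ q ^ m)) by lia. unfold qtwisted.
  rewrite (sum_single _ 0 m) by (lia || (intros j Hj Hj0;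
    rewrite (qpoch_terminates _ _ (m - j) m); [ring| |lia];
    rewrite Rmult_assoc, <- pow_add, Nat.add_sub_assoc, Nat.add_comm, Nat.add_sub
      by exact Hj; apply inv_pow_cancel)).
  rewrite qcoef_0. simpl. rewrite !Rmult_1_r, Rmult_1_l. reflexivity.
Qed.

End TerminatingSeries.

(* Gaussian binomial coefficients, in the form
     [m k]_q = (q^-m;q)_k (-1)^k q^(m k) / (q^(k(k-1)/2) (q;q)_k)
   in which they appear in the little q-Laguerre polynomials. *)
Definition qbinom (q : R) (m k : nat) : R :=
  qpoch (/ q ^ m) q k * (-1) ^ k * q ^ (m * k) / (qtri q k * qpoch q q k).

Definition qweight (q a : R) (k : nat) : R := qtri q k ^ 2 * a ^ k / qpoch a q k.

Section GaussianBinomial.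

Variable q : R.
Hypothesis Hq : 0 < q < 1.

Lemma qbinom_0 (m : nat) : qbinom q m 0 = 1.
Proof.
  unfold qbinom. rewrite qtri_0 by lra. simpl. rewrite Nat.mul_0_r. simpl. field.
Qed.

Lemma qbinom_vanish (m k : nat) : (m < k)%nat -> qbinom q m k = 0.
Proof.
  intros H. unfold qbinom.
  rewrite (qpoch_terminates _ _ m k (inv_pow_cancel q Hq m) H). unfold Rdiv. ring.
Qed.

Lemma qbinom_pascal (m k : nat) :
  qbinom q (S m) (S k) = q ^ S k * qbinom q m (S k) + qbinom q m k.
Proof.
  unfold qbinom. rewrite qpoch_succ_l, !qtri_S by lra.
  replace (/ q ^ S m * q) with (/ q ^ m)
    by (simpl; field; split; [apply pow_nonzero|]; lra).
  simpl qpoch.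
  replace (S m * S k)%nat with (m * k + m + k + 1)%nat by lia.
  replace (m * S k)%nat with (m * k + m)%nat by lia.
  rewrite !pow_add. simpl.
  pose proof (qq_pos q Hq k). pose proof (qtri_pos q k).
  assert (q ^ k > 0) by (apply pow_lt; lra).
  assert (q ^ m > 0) by (apply pow_lt; lra).
  assert (q * q ^ k < 1) by (pose proof (pow_in_unit q k Hq); nra).
  field. repeat split; lra.
Qed.

(* Gaussian binomials are nonnegative, by the q-Pascal rule. *)
Lemma qbinom_nonneg (m k : nat) : 0 <= qbinom q m k.
Proof.
  revert k. induction m as [|m IH]; intros [|k].
  - rewrite qbinom_0; lra.
  - rewrite qbinom_vanish by lia; lra.
  - rewrite qbinom_0; lra.
  - rewrite qbinom_pascal. pose proof (IH (S k)). pose proof (IH k).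
    assert (0 < q ^ S k) by (apply pow_lt; lra). nra.
Qed.

Lemma qbinom_diag (m : nat) : qbinom q m m = 1.
Proof.
  induction m as [|m IH]; [apply qbinom_0|].
  rewrite qbinom_pascal, IH, qbinom_vanish by lia. ring.
Qed.

(* [m m]_q = 1 evaluates (q^-m;q)_m; we use it squared. *)
Lemma qpoch_reversed_sq (m : nat) :
  qpoch (/ q ^ m) q m ^ 2 * q ^ (m * m) * q ^ m = qpoch q q m ^ 2.
Proof.
  pose proof (qbinom_diag m) as H. unfold qbinom in H.
  pose proof (qq_pos q Hq m). pose proof (qtri_pos q m).
  assert (Ht : 0 < q ^ (m * m)) by (apply pow_lt; lra).
  assert (Hdiag : qpoch (/ q ^ m) q m * (-1) ^ m * q ^ (m * m) = qtri q m * qpoch q q m).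
  { apply (Rmult_eq_reg_r (/ (qtri q m * qpoch q q m))).
    - rewrite Rinv_r by nra. exact H.
    - apply Rinv_neq_0_compat. nra. }
  apply (Rmult_eq_reg_l (q ^ (m * m))); [|lra].
  transitivity ((qpoch (/ q ^ m) q m * (-1) ^ m * q ^ (m * m)) ^ 2 * q ^ m).
  - rewrite !Rpow_mult_distr.
    replace (((-1) ^ m) ^ 2) with ((-1) ^ m * (-1) ^ m) by ring.
    rewrite neg1_sq. ring.
  - rewrite Hdiag, <- (qtri_sq q m) by lra. ring.
Qed.

Lemma qweight_pos (a : R) (k : nat) : 0 < a < 1 -> 0 < qweight q a k.
Proof.
  intros Ha. unfold qweight. pose proof (qtri_pos q k).
  pose proof (qpoch_pos a q k ltac:(lra) Hq).
  assert (0 < a ^ k) by (apply pow_lt; lra).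
  apply Rdiv_lt_0_compat; [|lra]. apply Rmult_lt_0_compat; [|lra]. apply pow_lt; lra.
Qed.

Lemma qweight_S (a : R) (k : nat) : 0 <= a < 1 ->
  q ^ k * qweight q a k + qweight q a (S k) = qweight q (a * q) k / (1 - a).
Proof.
  intros Ha. unfold qweight.
  assert (E : qpoch (a * q) q k = qpoch a q (S k) / (1 - a)).
  { rewrite qpoch_succ_l. field. lra. }
  rewrite E, qtri_S by lra. simpl qpoch.
  pose proof (qpoch_pos a q k Ha Hq).
  pose proof (pow_in_unit q k Hq).
  assert (a * q ^ k < 1) by nra.
  rewrite (Rpow_mult_distr a q k). simpl. field. repeat split; lra.
Qed.

(* sum_(k<=m) [m k]_q q^(k(k-1)) a^k / (a;q)_k = 1 / (a;q)_m,
   by induction on m with the q-Pascal rule. *)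
Lemma qbinom_weight_sum (m : nat) : forall a, 0 <= a < 1 ->
  sum_f_R0 (fun k => qbinom q m k * qweight q a k) m = / qpoch a q m.
Proof.
  induction m as [|m IH]; intros a Ha.
  - simpl. rewrite qbinom_0. unfold qweight. rewrite qtri_0 by lra. simpl. field.
  - assert (Hpascal : sum_f_R0 (fun k => qbinom q (S m) k * qweight q a k) (S m)
      = sum_f_R0 (fun k => q ^ k * qbinom q m k * qweight q a k) m
        + sum_f_R0 (fun k => qbinom q m k * qweight q a (S k)) m).
    { rewrite (decomp_sum _ (S m)) by lia. simpl pred.
      rewrite (sum_eq _ (fun j => q ^ S j * qbinom q m (S j) * qweight q a (S j)
                                  + qbinom q m j * qweight q a (S j)))
        by (intros; rewrite qbinom_pascal; ring).
      rewrite sum_plus, <- Rplus_assoc. f_equal.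
      rewrite (sum_shift (fun k => q ^ k * qbinom q m k * qweight q a k))
        by (rewrite qbinom_vanish by lia; ring).
      rewrite !qbinom_0. simpl. ring. }
    assert (Hstep : sum_f_R0 (fun k => q ^ k * qbinom q m k * qweight q a k) m
      + sum_f_R0 (fun k => qbinom q m k * qweight q a (S k)) m
      = sum_f_R0 (fun k => qbinom q m k * qweight q (a * q) k) m / (1 - a)).
    { rewrite <- sum_plus. unfold Rdiv. rewrite Rmult_comm, <- sum_scal_l.
      apply sum_eq. intros k _.
      replace (qweight q (a * q) k) with (qweight q (a * q) k / (1 - a) * (1 - a))
        by (field; lra).
      rewrite <- (qweight_S a k Ha). field. lra. }
    assert (Haq : 0 <= a * q < 1) by nra.
    pose proof (qpoch_pos (a * q) q m Haq Hq).
    rewrite Hpascal, Hstep, IH, qpoch_succ_l by exact Haq. field. lra.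
Qed.

End GaussianBinomial.

(* Coefficients of the little q-Laguerre polynomials: the k-th coefficient of
   the m-th polynomial (up to normalisation) is
     (q^-m;q)_k q^(k(k-1)/2) a^k q^(m k) / ((q;q)_k (a;q)_k), a = q^(alpha+1). *)
Definition lqcoef (q a : R) (m k : nat) : R :=
  qpoch (/ q ^ m) q k * qtri q k * a ^ k * q ^ (m * k) / (qpoch q q k * qpoch a q k).

(* The moments (a;q)_N q^(-N(N-1)/2) a^-N; the matrix of the theorem is
   the Hankel matrix of these moments. *)
Definition qmoment (q a : R) (N : nat) : R := qpoch a q N / (qtri q N * a ^ N).

(* Squared norms of the polynomials against the moment functional. *)
Definition lqnorm (q a : R) (m : nat) : R := qpoch q q m / (q ^ m * qpoch a q m).

Definition gram (q a : R) (n m l : nat) : R :=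
  sum_f_R0 (fun j => sum_f_R0 (fun k =>
    lqcoef q a m j * qmoment q a (j + k) * lqcoef q a l k) n) n.

Section LittleQLaguerre.

Variables q a : R.
Hypothesis Hq : 0 < q < 1.
Hypothesis Ha : 0 < a < 1.

Lemma aq_pos (k : nat) : 0 < qpoch a q k.
Proof. apply qpoch_pos; lra. Qed.

Lemma lqcoef_sign (m k : nat) :
  lqcoef q a m k * (-1) ^ k = qbinom q m k * qweight q a k.
Proof.
  unfold lqcoef, qbinom, qweight.
  pose proof (qtri_pos q k). pose proof (qq_pos q Hq k). pose proof (aq_pos k).
  field. repeat split; lra.
Qed.

Lemma lqcoef_vanish (m k : nat) : (m < k)%nat -> lqcoef q a m k = 0.
Proof.
  intros H. unfold lqcoef.
  rewrite (qpoch_terminates _ _ m k (inv_pow_cancel q Hq m) H). unfold Rdiv. ring.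
Qed.

Lemma lqcoef_diag (m : nat) : lqcoef q a m m <> 0.
Proof.
  intro H. pose proof (lqcoef_sign m m) as E.
  rewrite H, qbinom_diag in E by lra.
  pose proof (qweight_pos q Hq a m Ha). lra.
Qed.

Lemma lqcoef_alternating_sum (m n : nat) : (m <= n)%nat ->
  sum_f_R0 (fun k => lqcoef q a m k * (-1) ^ k) n = / qpoch a q m.
Proof.
  intros Hmn.
  rewrite (sum_truncate _ m n Hmn) by (intros k Hk; rewrite lqcoef_vanish by lia; ring).
  rewrite <- (qbinom_weight_sum q Hq m a) by lra.
  apply sum_eq. intros. apply lqcoef_sign.
Qed.

Lemma moment_pairing (m n k : nat) : (m <= n)%nat -> (k <= m)%nat ->
  sum_f_R0 (fun j => lqcoef q a m j * qmoment q a (j + k)) n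
  = qtwisted q m (m - k) k a / (qtri q k * a ^ k).
Proof.
  intros Hmn Hkm.
  rewrite (sum_truncate _ m n Hmn) by (intros j Hj; rewrite lqcoef_vanish by lia; ring).
  unfold qtwisted, Rdiv. rewrite (Rmult_comm _ (/ _)), scal_sum.
  apply sum_eq. intros j _.
  unfold lqcoef, qmoment, qcoef. rewrite qpoch_add, qtri_add by lra.
  assert (E : q ^ (m * j) = (q ^ (m - k)) ^ j * q ^ (j * k)).
  { rewrite <- pow_mult, <- pow_add. f_equal. nia. }
  rewrite E, pow_add.
  pose proof (qtri_pos q k). pose proof (qtri_pos q j).
  pose proof (qq_pos q Hq j). pose proof (aq_pos j).
  assert (0 < a ^ j) by (apply pow_lt; lra). assert (0 < a ^ k) by (apply pow_lt; lra).
  assert (0 < q ^ (j * k)) by (apply pow_lt; lra).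
  field. repeat split; lra.
Qed.

Lemma moment_pairing_below (m n k : nat) : (m <= n)%nat -> (k < m)%nat ->
  sum_f_R0 (fun j => lqcoef q a m j * qmoment q a (j + k)) n = 0.
Proof.
  intros Hmn Hkm. rewrite moment_pairing, qtwisted_vanish by (lra || lia).
  unfold Rdiv. ring.
Qed.

Lemma lqnorm_pos (m : nat) : 0 < lqnorm q a m.
Proof.
  unfold lqnorm. pose proof (qq_pos q Hq m). pose proof (aq_pos m).
  assert (0 < q ^ m) by (apply pow_lt; lra).
  apply Rdiv_lt_0_compat; [lra|]. apply Rmult_lt_0_compat; lra.
Qed.

Lemma moment_pairing_diag (m n : nat) : (m <= n)%nat ->
  lqcoef q a m m * sum_f_R0 (fun j => lqcoef q a m j * qmoment q a (j + m)) n
  = lqnorm q a m.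
Proof.
  intros Hmn.
  rewrite moment_pairing, Nat.sub_diag, qtwisted_0, qseries_at_1 by (lra || lia).
  pose proof (qpoch_reversed_sq q Hq m) as Hsq.
  unfold lqcoef, lqnorm.
  pose proof (qtri_pos q m). pose proof (qq_pos q Hq m). pose proof (aq_pos m).
  assert (0 < a ^ m) by (apply pow_lt; lra).
  assert (0 < q ^ m) by (apply pow_lt; lra).
  transitivity (qpoch (/ q ^ m) q m ^ 2 * q ^ (m * m) * q ^ m
                / (q ^ m * qpoch q q m * qpoch a q m)).
  - field. repeat split; lra.
  - rewrite Hsq. field. repeat split; lra.
Qed.

(* The Gram matrix is symmetric, the moment matrix being Hankel. *)
Lemma gram_sym (n m l : nat) : gram q a n m l = gram q a n l m.
Proof.
  unfold gram. rewrite sum_swap. apply sum_eq. intros. apply sum_eq. intros.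
  rewrite Nat.add_comm. ring.
Qed.

(* Gram entries with l <= m, where orthogonality is available. *)
Lemma gram_lower (n m l : nat) : (l <= m)%nat -> (m <= n)%nat ->
  gram q a n m l = if Nat.eq_dec m l then lqnorm q a m else 0.
Proof.
  intros Hlm Hmn.
  assert (Hrows : gram q a n m l = sum_f_R0 (fun k => lqcoef q a l k *
            sum_f_R0 (fun j => lqcoef q a m j * qmoment q a (j + k)) n) n).
  { unfold gram. rewrite sum_swap. apply sum_eq. intros k _.
    rewrite <- sum_scal_l. apply sum_eq. intros. ring. }
  (* only k = m can contribute: for k <= l (hence k < m) the pairing vanishes
     by orthogonality, for k > l the l-th polynomial has no x^k term *)
  assert (Hz : forall k, (k <= n)%nat -> k <> m -> lqcoef q a l k *
            sum_f_R0 (fun j => lqcoef q a m j * qmoment q a (j + k)) n = 0).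
  { intros k Hk Hkm. destruct (Compare_dec.le_lt_dec k l) as [Hkl|Hkl].
    - rewrite moment_pairing_below by lia. ring.
    - rewrite lqcoef_vanish by lia. ring. }
  rewrite Hrows. destruct (Nat.eq_dec m l) as [<-|E].
  - rewrite (sum_single _ m n Hmn Hz). apply moment_pairing_diag, Hmn.
  - apply sum_zeros. intros k Hk. destruct (Nat.eq_dec k m) as [->|].
    + rewrite lqcoef_vanish by lia. ring.
    + apply Hz; auto.
Qed.

Lemma gram_diagonal (n m l : nat) : (m <= n)%nat -> (l <= n)%nat ->
  gram q a n m l = if Nat.eq_dec m l then lqnorm q a m else 0.
Proof.
  intros Hm Hl. destruct (Compare_dec.le_lt_dec l m).
  - apply gram_lower; auto.
  - rewrite gram_sym, gram_lower by lia.
    destruct (Nat.eq_dec l m), (Nat.eq_dec m l); try lia; reflexivity.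
Qed.

(* |row_m|^2 / d_m <= (sum_k |c_(m,k)|)^2 / d_m = q^m / ((q;q)_m (a;q)_m). *)
Lemma row_norm_bound (m n : nat) : (m <= n)%nat ->
  sum_f_R0 (fun k => lqcoef q a m k ^ 2) n / lqnorm q a m
  <= q ^ m / (qpoch q q m * qpoch a q m).
Proof.
  intros Hmn.
  assert (H1 : sum_f_R0 (fun k => lqcoef q a m k ^ 2) n <= (/ qpoch a q m) ^ 2).
  { rewrite <- (lqcoef_alternating_sum m n Hmn).
    rewrite (sum_eq _ (fun k => (lqcoef q a m k * (-1) ^ k) ^ 2)).
    - apply sum_sq_le_sq_sum. intros k _. rewrite lqcoef_sign.
      pose proof (qbinom_nonneg q Hq m k). pose proof (qweight_pos q Hq a k Ha). nra.
    - intros k _. rewrite Rpow_mult_distr.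
      replace (((-1) ^ k) ^ 2) with ((-1) ^ k * (-1) ^ k) by ring.
      rewrite neg1_sq. ring. }
  pose proof (lqnorm_pos m). pose proof (qq_pos q Hq m). pose proof (aq_pos m).
  assert (0 < q ^ m) by (apply pow_lt; lra).
  apply Rle_trans with ((/ qpoch a q m) ^ 2 / lqnorm q a m).
  - unfold Rdiv. apply Rmult_le_compat_r; [left; apply Rinv_0_lt_compat|]; lra.
  - right. unfold lqnorm. field. repeat split; lra.
Qed.

End LittleQLaguerre.

Lemma Rpower_pos (x y : R) : 0 < Rpower x y.
Proof. apply exp_pos. Qed.

Lemma shift_parameter_bounds (q alpha : R) : 0 < q < 1 -> -1 < alpha ->
  0 < Rpower q (alpha + 1) < 1.
Proof.
  intros Hq Hal. split; [apply Rpower_pos|].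
  replace 1 with (Rpower 1 (alpha + 1)) at 2
    by (unfold Rpower; rewrite ln_1, Rmult_0_r; apply exp_0).
  apply Rlt_Rpower_l; lra.
Qed.

Lemma hankelA_moment (q alpha : R) (j k : nat) : 0 < q ->
  hankelA q alpha j k = qmoment q (Rpower q (alpha + 1)) (j + k).
Proof.
  intros Hq. unfold hankelA, qmoment, qtri.
  replace (j + k + 1)%nat with (S (j + k)) by lia.
  set (N := (j + k)%nat). rewrite choose2_S.
  replace (- (choose2 N + INR N) - alpha * INR N)
    with (- choose2 N + - ((alpha + 1) * INR N)) by ring.
  rewrite (Rpower_plus (- choose2 N)), !Rpower_Ropp, <- Rpower_mult, Rpower_pow
    by apply Rpower_pos.
  pose proof (Rpower_pos q (choose2 N)).
  assert (0 < Rpower q (alpha + 1) ^ N) by (apply pow_lt, Rpower_pos).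
  field. lra.
Qed.

Lemma ell_term (q alpha : R) (m k : nat) : 0 < q < 1 -> -1 < alpha ->
  qpoch (Rpower q (- INR m)) q k * Rpower q (choose2 (k + 1))
    * Rpower q ((alpha + INR m) * INR k) * (-1) ^ k
    / (qpoch q q k * qpoch (Rpower q (alpha + 1)) q k)
  = lqcoef q (Rpower q (alpha + 1)) m k * (-1) ^ k.
Proof.
  intros Hq' Hal. assert (Hq : 0 < q) by lra. unfold lqcoef, qtri.
  pose proof (shift_parameter_bounds q alpha Hq' Hal) as Ha.
  pose proof (qq_pos q Hq' k). pose proof (qpoch_pos (Rpower q (alpha + 1)) q k ltac:(lra) Hq').
  rewrite Rpower_Ropp, Rpower_pow by exact Hq.
  replace (k + 1)%nat with (S k) by lia. rewrite choose2_S, Rpower_plus, Rpower_pow by exact Hq.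
  replace ((alpha + INR m) * INR k) with ((alpha + 1) * INR k + INR (m * k) + - INR k)
    by (rewrite mult_INR; ring).
  rewrite (Rpower_plus ((alpha + 1) * INR k + INR (m * k))),
    (Rpower_plus ((alpha + 1) * INR k)), Rpower_Ropp, <- Rpower_mult, !Rpower_pow
    by (exact Hq || apply Rpower_pos).
  assert (0 < q ^ k) by (apply pow_lt, Hq).
  field. repeat split; lra.
Qed.

Lemma ell_at_minus_one (q alpha : R) (m : nat) : 0 < q < 1 -> -1 < alpha ->
  ell q alpha m (-1) =
  (-1) ^ m * sqrt (qpoch (Rpower q (alpha + 1)) q m * q ^ m / qpoch q q m)
  * / qpoch (Rpower q (alpha + 1)) q m.
Proof.
  intros Hq Hal. pose proof (shift_parameter_bounds q alpha Hq Hal) as Ha.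
  unfold ell. f_equal.
  rewrite (sum_eq _ (fun k => lqcoef q (Rpower q (alpha + 1)) m k * (-1) ^ k))
    by (intros; apply ell_term; assumption).
  apply lqcoef_alternating_sum; (assumption || lia).
Qed.

Lemma ell_at_minus_one_sq (q alpha : R) (m : nat) : 0 < q < 1 -> -1 < alpha ->
  (ell q alpha m (-1)) ^ 2
  = q ^ m / (qpoch q q m * qpoch (Rpower q (alpha + 1)) q m).
Proof.
  intros Hq Hal. rewrite ell_at_minus_one by assumption.
  pose proof (shift_parameter_bounds q alpha Hq Hal) as Ha.
  set (a := Rpower q (alpha + 1)) in *.
  pose proof (qq_pos q Hq m). pose proof (qpoch_pos a q m ltac:(lra) Hq).
  assert (0 < q ^ m) by (apply pow_lt; lra).
  assert (Hsqrt : sqrt (qpoch a q m * q ^ m / qpoch q q m) ^ 2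
                  = qpoch a q m * q ^ m / qpoch q q m).
  { simpl. rewrite Rmult_1_r. apply sqrt_sqrt. apply Rlt_le, Rdiv_lt_0_compat; nra. }
  rewrite !Rpow_mult_distr, Hsqrt.
  replace (((-1) ^ m) ^ 2) with ((-1) ^ m * (-1) ^ m) by ring.
  rewrite neg1_sq. field. lra.
Qed.

Theorem mainTheorem10 (q alpha : R) (n : nat) :
  0 < q < 1 -> -1 < alpha ->
  (forall lam_s : R,
     is_smallest_eigenvalue n (hankelA q alpha) lam_s ->
     lam_s >= / sum_f_R0 (fun m =>
        q ^ m / (qpoch q q m * qpoch (Rpower q (alpha + 1)) q m)) n)
  /\
  (forall m : nat,
     (ell q alpha m (-1)) ^ 2
     = q ^ m / (qpoch q q m * qpoch (Rpower q (alpha + 1)) q m)).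
Proof.
  intros Hq Hal.
  split; [|intros m; apply ell_at_minus_one_sq; assumption].
  intros lam [[v [Hv Heig]] _].
  pose proof (shift_parameter_bounds q alpha Hq Hal) as Ha.
  set (a := Rpower q (alpha + 1)) in *.
  (* A is congruent to diag(lqnorm) via the little q-Laguerre coefficients *)
  apply Rle_ge, (eigenvalue_ge_inv n (hankelA q alpha) (lqcoef q a) (lqnorm q a)
                   (fun m _ => lqnorm_pos q a Hq Ha m)
                   (fun m _ => lqcoef_diag q a Hq Ha m)) with v; try assumption.
  - intros m k _ _ Hmk. apply lqcoef_vanish; assumption.
  - intros m l Hm Hl. rewrite <- (gram_diagonal q a Hq Ha n m l Hm Hl).
    apply sum_eq. intros j _. apply sum_eq. intros k _.
    rewrite hankelA_moment by lra. reflexivity.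
  (* each row contributes at most ell_m(-1)^2 to tr(A^-1) *)
  - apply sum_Rle. intros m Hm. apply row_norm_bound; assumption.
Qed.
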